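(* Consider the Que Sera Consensus (QSC) protocol, as described in the context, running on $n$ nodes atop a full-spread threshold synchronous broadcast primitive $\mathrm{TSB}(t_r,t_b,n)$ with $t_r>0$ and $t_b>0$. If the network's choice of the sets $N_R$ and $N_B$ (determining which messages each node receives and learns were reliably broadcast) is independent of the proposal priorities, and $p_t$ is the probability that two nodes tie for highest priority in a round, then each node delivers a history in each round independently with probability at least $t_b/n-p_t$.
   Context: Threshold synchronous broadcast (TSB). A group of $n$ nodes, numbered $1,\dots,n$, operates in integer logical time-steps $0,1,2,\dots$. Nodes may fail only by crashing permanently. In each time-step every non-failed node calls $\mathrm{Broadcast}(m)$ exactly once; the call returns a pair $(R,B)$ of message sets. A primitive provides $\mathrm{TSB}(t_r,t_b,t_s)$ if: (lock-step synchrony) a call to $\mathrm{Broadcast}(m)$ at step $s$ returns at step $s+1$ unless the node fails before reaching step $s+1$; (receive threshold) if node $i$'s call at step $s$ returns $(R,B)$, there is $N_R\subseteq\{1,\dots,n\}$ with $|N_R|\ge t_r$ such that $R$ is exactly the set of messages broadcast by the nodes in $N_R$ during step $s$; (broadcast threshold) there is $N_B\subseteq\{1,\dots,n\}$ with $|N_B|\ge t_b$ such that $B$ is exactly the set of messages broadcast by the nodes in $N_B$ during step $s$; (spread threshold) if some node's call at step $s$ returns $(R,B)$ with $m'\in B$, then there are at least $t_s$ nodes whose receive sets $R$ returned from their step-$s$ calls include $m'$ (a node that fails before completing step $s$ counts if it would have received $m'$ had it not failed). The case $t_s=n$ is called full-spread. Histories and priorities. A proposal is a triple $\langle i,m,r\rangle$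 (node, message, numeric priority). A history is a finite list of proposals; $[]$ is the empty history and $\|$ is list concatenation. The priority of a nonempty history is the priority $r$ of its last proposal. A history $h$ is best in a set $H$ if $h\in H$ and no $h'\in H$ has strictly greater priority; $h$ is uniquely best in $H$ if $h\in H$ and no other $h'\ne h$ in $H$ has priority greater than or equal to that of $h$. QSC protocol. It is parameterized by functions ChooseMessage (returns some message, possibly empty), Deliver (passes a history to the application), RandomValue (returns a value drawn using node-private randomness, independently on each node, from a fixed nontrivial distribution that is the same on every node), and Broadcast (the TSB primitive). Each node $i$ runs: set $h\leftarrow[]$; then forever repeat a consensus round: $m\leftarrow\mathrm{ChooseMessage}()$; $r\leftarrow\mathrm{RandomValue}()$; $h'\leftarrow h\,\|\,[\langle i,m,r\rangle]$; $(R',B')\leftarrow\mathrm{Broadcast}(h')$; $h''\leftarrow$ any best history in $B'$; $(R'',B'')\leftarrow\mathrm{Broadcast}(h'')$; $h\leftarrow$ any best history in $R''$; if $h\in B''$ and $h$ is uniquely best in $R'$, call $\mathrm{Deliver}(h)$. Each round occupies two time-steps. *)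

From HB Require Import structures.
From mathcomp Require Import all_boot all_order all_algebra.
From mathcomp Require Import all_classical all_reals all_analysis.
Set Implicit Arguments. Unset Strict Implicit. Unset Printing Implicit Defensive.
Import Order.TTheory GRing.Theory Num.Theory.
Local Open Scope classical_set_scope.
Local Open Scope ring_scope.

Section QSC.
Variables (R : realType) (n : nat) (M : Type).

Definition proposal := ('I_n * M * R)%type.
Definition history := seq proposal.

(* priority of a nonempty history = priority of its last proposal
   (the value on the empty history is irrelevant: every history that is
   broadcast in QSC is nonempty) *)
Definition prio (h : history) : R :=
  match h with [::] => 0 | p :: h' => (last p h').2 end.

Definition best (h : history) (H : set history) : Prop :=
  H h /\ forall h', H h' -> prio h' <= prio h.

Definition uniquely_best (h : history) (H : set history) : Prop :=
  H h /\ forall h', H h' -> h' <> h -> prio h' < prio h.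

Definition msgs_of (msg : 'I_n -> history) (N : {set 'I_n}) : set history :=
  [set h | exists2 j, j \in N & h = msg j].

(* ---------- one QSC consensus round (two TSB time-steps) ----------
   hs j : history of node j at the start of the round,
   ms j : message returned by ChooseMessage at node j,
   r j  : priority returned by RandomValue at node j,
   NR1/NB1 (resp. NR2/NB2) : the network's choice of N_R / N_B for each
   node's Broadcast call in the first (resp. second) time-step,
   sel1 j / sel2 j : node j's resolution of "any best history in ...". *)
Definition step1_msg (hs : 'I_n -> history) (ms : 'I_n -> M) (r : 'I_n -> R)
  (j : 'I_n) : history := hs j ++ [:: (j, ms j, r j)].

Definition step2_msg hs ms r (NB1 : 'I_n -> {set 'I_n})
  (sel1 : 'I_n -> set history -> history) (j : 'I_n) : history :=
  sel1 j (msgs_of (step1_msg hs ms r) (NB1 j)).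

Definition delivers hs ms r (NR1 NB1 NR2 NB2 : 'I_n -> {set 'I_n})
  (sel1 sel2 : 'I_n -> set history -> history) (i : 'I_n) : Prop :=
  let R1 := msgs_of (step1_msg hs ms r) (NR1 i) in
  let R2 := msgs_of (step2_msg hs ms r NB1 sel1) (NR2 i) in
  let B2 := msgs_of (step2_msg hs ms r NB1 sel1) (NB2 i) in
  let h := sel2 i R2 in
  B2 h /\ uniquely_best h R1.

(* ---------- the TSB(t_r, t_b, n) (full-spread) guarantees for one step ----
   A : nodes that broadcast in this step, C : nodes whose call of this step
   returns (C \subset A), msg : the messages broadcast.
   N_R, N_B only contain broadcasting nodes; thresholds hold for every
   returning call; full spread: a message in some returned B lies in the
   (possibly hypothetical, for failed nodes) receive set of every node. *)
Definition TSB_step (tr tb : nat) (A C : {set 'I_n}) (msg : 'I_n -> history)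
  (NR NB : 'I_n -> {set 'I_n}) : Prop :=
  [/\ C \subset A,
      forall j, NR j \subset A /\ NB j \subset A,
      forall j, j \in C -> (tr <= #|NR j|)%N /\ (tb <= #|NB j|)%N
    & forall k h, k \in C -> msgs_of msg (NB k) h ->
        forall l : 'I_n, msgs_of msg (NR l) h].

Definition selects_best (sel : 'I_n -> set history -> history) : Prop :=
  forall j H, (exists h, best h H) -> best (sel j H) H.

End QSC.

Section Prob.
Local Open Scope ereal_scope.
Variables (d : measure_display) (Omega : measurableType d) (R : realType)
  (P : probability Omega R) (n : nat).

Definition mutually_independent (r : 'I_n -> Omega -> R) : Prop :=
  forall B : 'I_n -> set R, (forall j, measurable (B j)) ->
    P [set w | forall j, B j (r j w)] =
    \big[*%E/1%E]_(j < n) P (r j @^-1` B j).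

Definition identically_distributed (r : 'I_n -> Omega -> R) : Prop :=
  forall j k (B : set R), measurable B -> P (r j @^-1` B) = P (r k @^-1` B).

Definition nontrivial_distribution (r : 'I_n -> Omega -> R) : Prop :=
  forall j, ~ (exists a : R, P (r j @^-1` [set a]) = 1).

(* "E has probability at least x": some measurable subset of E has
   probability >= x (inner probability; avoids measurability side issues) *)
Definition prob_at_least (E : set Omega) (x : \bar R) : Prop :=
  exists2 F, measurable F & F `<=` E /\ x <= P F.

End Prob.

Definition tie_for_highest (R : realType) (n : nat) (A : {set 'I_n})
  (r : 'I_n -> R) : Prop :=
  exists j k, [/\ j \in A, k \in A, j != k, r j = r k
                & forall l, l \in A -> (r l <= r j)%R].

From HB Require Import structures.
From mathcomp Require Import all_boot all_order all_algebra.
From mathcomp Require Import all_classical all_reals all_analysis.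
From mathcomp Require Import perm lra.
Set Implicit Arguments.
Unset Strict Implicit.
Unset Printing Implicit Defensive.
Import Order.TTheory GRing.Theory Num.Theory.
Local Open Scope classical_set_scope.
Local Open Scope ring_scope.

(* Suppose node j has the unique highest priority among the nodes A1 that
   broadcast in the first step, and j lies in N_B of the first-step call of a
   node k that itself lies in N_B of node i's second-step call.  Then k
   rebroadcasts j's proposal, and since every second-step message is a
   first-step proposal, j's proposal is the unique best history everywhere;
   full spread puts it in every receive set, so node i delivers it.
   The events "j is the strict maximum", j in A1, are disjoint and their union
   is the complement of a tie.  Independent identically distributed priorities
   have a permutation-invariant joint law (Dynkin's pi-lambda theorem on
   measurable boxes), so these events are equally likely.  At least t_b of the
   |A1| <= n nodes are good choices of j, so i delivers with probability at
   least (t_b / n) (1 - p_t) >= t_b / n - p_t. *)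

Definition strict_max {R : realType} {n : nat} (A : {set 'I_n}) (j : 'I_n) :
    set ('I_n -> R) :=
  [set x | forall l, l \in A -> l != j -> x l < x j].

Section strict_max.
Variables (R : realType) (n : nat).
Implicit Types (A S : {set 'I_n}) (x : 'I_n -> R).

Definition strict_max_in A S : set ('I_n -> R) :=
  [set x | exists2 j, j \in S & strict_max A j x].

Lemma strict_max_uniq A j k x : j \in A -> k \in A ->
  strict_max A j x -> strict_max A k x -> j = k.
Proof.
move=> jA kA jmax kmax; apply/eqP/contraT => jk.
have kj : k != j by rewrite eq_sym.
by have := lt_trans (jmax k kA kj) (kmax j jA jk); rewrite ltxx.
Qed.

Lemma tie_for_highest_no_strict_max A x j0 : j0 \in A ->
  tie_for_highest A x <-> ~ strict_max_in A A x.
Proof.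
move=> j0A; split=> [[j [k [jA kA jk xjk jtop]]] [l lA lmax]|no_max].
  have lj : l = j.
    apply/eqP/contraT => lj; have jl : j != l by rewrite eq_sym.
    by have := lmax j jA jl; rewrite ltNge jtop.
  have kl : k != l by rewrite lj eq_sym.
  by have := lmax k kA kl; rewrite lj xjk ltxx.
have [|m mA mtop] := @real_arg_maxP _ _ j0 (mem A) x j0A.
  by move=> *; exact: num_real.
have [l [lA lm xml]] : exists l, [/\ l \in A, l != m & x m <= x l].
  apply: contrapT => no_l; apply: no_max; exists m => // l lA lm.
  by rewrite ltNge; apply/negP => xml; apply: no_l; exists l.
exists m, l; split=> //; first by rewrite eq_sym.
by apply/eqP; rewrite eq_le xml; exact: mtop.
Qed.

Lemma strict_max_perm (s : {perm 'I_n}) A j :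
  (forall l, (s l \in A) = (l \in A)) ->
  (fun x : 'I_n -> R => x \o s) @^-1` strict_max A j = strict_max A (s j).
Proof.
move=> sA; apply/seteqP; split=> x /= jmax l lA lj.
  have := jmax (s^-1 l)%g; rewrite /= permKV; apply.
    by rewrite -sA permKV.
  by apply: contraNneq lj => <-; rewrite permKV.
by apply: jmax; rewrite ?sA // (inj_eq perm_inj).
Qed.

End strict_max.

Section histories.
Variables (R : realType) (n : nat) (M : Type).
Implicit Types (h : history R n M) (H : set (history R n M)).

Lemma uniquely_best_best h H : uniquely_best h H -> best h H.
Proof.
move=> [Hh hmax]; split=> // h' Hh'.
by have [->|/(hmax _ Hh')/ltW] := pselect (h' = h).
Qed.

Lemma best_uniquely_best_eq h h' H : uniquely_best h H -> best h' H -> h' = h.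
Proof.
move=> [Hh hmax] [Hh' h'max]; apply: contrapT => /(hmax _ Hh').
by rewrite ltNge h'max.
Qed.

Lemma selects_best_uniquely sel j h H :
  selects_best sel -> uniquely_best h H -> sel j H = h.
Proof.
move=> sel_best hH; apply: best_uniquely_best_eq (hH) _.
by apply: sel_best; exists h; exact: uniquely_best_best hH.
Qed.

Lemma msgs_ofS (msg : 'I_n -> history R n M) (S S' : {set 'I_n}) :
  S \subset S' -> msgs_of msg S `<=` msgs_of msg S'.
Proof. by move=> SS' _ [j /(fintype.subsetP SS') jS' ->]; exists j. Qed.

End histories.

Section qsc_round.
Variables (R : realType) (n : nat) (M : Type).
Variables (hs : 'I_n -> history R n M) (ms : 'I_n -> M) (x : 'I_n -> R).
Local Notation msg1 := (step1_msg hs ms x).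

Lemma prio_step1_msg j : prio (msg1 j) = x j.
Proof.
by rewrite /step1_msg /prio; case: (hs j) => //= ? ?; rewrite last_cat.
Qed.

Lemma exists_best_step1_msgs (S : {set 'I_n}) l :
  l \in S -> exists h, best h (msgs_of msg1 S).
Proof.
move=> lS; have [|m mS mmax] := @real_arg_maxP _ _ l (mem S) x lS.
  by move=> *; exact: num_real.
exists (msg1 m); split; first by exists m.
by move=> _ [k kS ->]; rewrite !prio_step1_msg; exact: mmax.
Qed.

Lemma step2_msg_mem (NB1 : 'I_n -> {set 'I_n}) sel1 l k :
  selects_best sel1 -> k \in NB1 l ->
  msgs_of msg1 (NB1 l) (step2_msg hs ms x NB1 sel1 l).
Proof. by move=> sel_best /exists_best_step1_msgs /(sel_best l) []. Qed.

Lemma uniquely_best_strict_max A j (H : set (history R n M)) :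
  strict_max A j x -> H `<=` msgs_of msg1 A -> H (msg1 j) ->
  uniquely_best (msg1 j) H.
Proof.
move=> jmax HA Hj; split=> // _ /HA [l lA ->] ne.
rewrite !prio_step1_msg; apply: jmax lA _.
by apply: contra_notN ne => /eqP ->.
Qed.

Lemma delivers_strict_max tr tb (A1 C1 A2 C2 : {set 'I_n})
    (NR1 NB1 NR2 NB2 : 'I_n -> {set 'I_n}) sel1 sel2 i k j :
  (0 < tb)%N -> selects_best sel1 -> selects_best sel2 -> A2 \subset C1 ->
  TSB_step tr tb A1 C1 msg1 NR1 NB1 ->
  TSB_step tr tb A2 C2 (step2_msg hs ms x NB1 sel1) NR2 NB2 ->
  i \in C2 -> k \in NB2 i -> j \in NB1 k -> strict_max A1 j x ->
  delivers hs ms x NR1 NB1 NR2 NB2 sel1 sel2 i.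
Proof.
move=> tb_gt0 sel1_best sel2_best A2C1 [_ sub1 thr1 spread1]
  [_ sub2 thr2 spread2] iC2 kNB2 jNB1 jmax.
set msg2 := step2_msg hs ms x NB1 sel1.
have NB1A1 l : NB1 l \subset A1 by case: (sub1 l).
have NR2C1 : NR2 i \subset C1.
  by apply: fintype.subset_trans _ A2C1; case: (sub2 i).
have msg2_A1 l : l \in C1 -> msgs_of msg1 A1 (msg2 l).
  move=> /thr1 [_ /(leq_trans tb_gt0)/card_gt0P [l0 l0NB1]].
  exact: msgs_ofS (NB1A1 l) _ (step2_msg_mem sel1_best l0NB1).
have msg2k : msg2 k = msg1 j.
  apply: selects_best_uniquely sel1_best _.
  apply: uniquely_best_strict_max jmax (msgs_ofS (NB1A1 k)) _.
  by exists j.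
have R2A1 : msgs_of msg2 (NR2 i) `<=` msgs_of msg1 A1.
  by move=> _ [l /(fintype.subsetP NR2C1) lC1 ->]; exact: msg2_A1.
have R2j : msgs_of msg2 (NR2 i) (msg1 j) by apply: (spread2 i) => //; exists k.
have kC1 : k \in C1.
  by apply: (fintype.subsetP A2C1); exact: (fintype.subsetP (sub2 i).2).
have R1j : msgs_of msg1 (NR1 i) (msg1 j) by apply: (spread1 k) => //; exists j.
have R2_best := uniquely_best_strict_max jmax R2A1 R2j.
rewrite /delivers -/msg2 (selects_best_uniquely _ sel2_best R2_best).
split; first by exists k; rewrite ?msg2k.
by apply: uniquely_best_strict_max jmax (msgs_ofS (sub1 i).1) R1j.
Qed.

End qsc_round.

Section boxes.
Variables (R : realType) (n : nat).

Definition boxes : set (set ('I_n -> R)) :=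
  [set [set x | forall j, B j (x j)]
  | B in [set B : 'I_n -> set R | forall j, measurable (B j)]].

Lemma boxes_setI : setI_closed boxes.
Proof.
move=> _ _ [B mB <-] [B' mB' <-].
exists (fun j => B j `&` B' j); first by move=> j; exact: measurableI.
apply/seteqP; split=> x /= => [Bx|[Bx B'x] j //].
by split=> j; case: (Bx j).
Qed.

Definition rat_box (A : {set 'I_n}) (j : 'I_n) (q : rat) : 'I_n -> set R :=
  fun l => if l == j then `]ratr q, +oo[%classic
           else if l \in A then `]-oo, ratr q[%classic else setT.

Lemma rat_box_strict_max A j q x :
  (forall l, rat_box A j q l (x l)) -> strict_max A j x.
Proof.
move=> xq l lA lj; have := xq l; have := xq j.
rewrite /rat_box eqxx (negbTE lj) lA /= !in_itv /= andbT.
by move=> qxj xlq; exact: lt_trans xlq qxj.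
Qed.

Lemma strict_max_rat_box A j x :
  strict_max A j x -> exists q, forall l, rat_box A j q l (x l).
Proof.
move=> jmax.
pose b := \big[Order.max/x j - 1]_(l in A :\ j) x l.
have b_lt : b < x j.
  apply: bigmax_lt; first by rewrite gtrBl ltr01.
  by move=> l; rewrite in_setD1 => /andP[lj lA]; exact: jmax.
have [q] := rat_in_itvoo b_lt; rewrite in_itv /= => /andP[bq qxj].
exists q => l; rewrite /rat_box.
case: eqP => [->|/eqP lj]; first by rewrite /= in_itv /= qxj.
case: ifP => lA //=; rewrite in_itv /=.
by apply: le_lt_trans bq; apply: le_bigmax_cond; rewrite in_setD1 lj.
Qed.

Lemma strict_max_sigma A j : <<s boxes >> (strict_max A j).
Proof.
have [_ _ sigmaU] := smallest_sigma_algebra setT boxes.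
(* Indices decoding to no rational yield the box for 0, which is harmless. *)
have -> : strict_max A j = \bigcup_m
    [set x | forall l, rat_box A j (odflt 0 (@pickle_inv rat m)) l (x l)].
  apply/seteqP; split=> [x /strict_max_rat_box [q xq]|x [m _]].
    by exists (pickle q) => //; rewrite pickleK_inv.
  exact: rat_box_strict_max.
apply: sigmaU => m; apply: sub_sigma_algebra; eexists => // l.
rewrite /rat_box; case: ifP => _; first exact: measurable_itv.
by case: ifP => _; [exact: measurable_itv|exact: measurableT].
Qed.

End boxes.
Arguments boxes {R n}.

Section law_agree.
Local Open Scope ereal_scope.
Variables (d : measure_display) (Omega : measurableType d) (R : realType).
Variable P : probability Omega R.

Definition law_agree (T : Type) (X Y : Omega -> T) : set (set T) :=
  [set B | [/\ measurable (X @^-1` B), measurable (Y @^-1` B)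
             & P (X @^-1` B) = P (Y @^-1` B)]].

Lemma law_agree_lambda_system (T : Type) (X Y : Omega -> T) :
  lambda_system setT (law_agree X Y).
Proof.
split=> //.
- by rewrite /law_agree /= !preimage_setT; split.
- move=> A B BA [mXA mYA eA] [mXB mYB eB].
  split; [exact: measurableD|exact: measurableD|].
  have preimageD (Z : Omega -> T) :
    Z @^-1` (A `\` B) = Z @^-1` A `\` Z @^-1` B by [].
  have finP C : measurable C -> P C < +oo.
    by move=> mC; rewrite ltey_eq fin_num_measure.
  rewrite !preimageD !measureD ?finP //.
  rewrite (setIidr (preimage_subset (f := X) BA)).
  by rewrite (setIidr (preimage_subset (f := Y) BA)); congr (_ - _).
- move=> F ndF lawF.
  have mX k : measurable (X @^-1` F k) by case: (lawF k).
  have mY k : measurable (Y @^-1` F k) by case: (lawF k).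
  rewrite /law_agree /= !preimage_bigcup.
  split; [exact: bigcupT_measurable|exact: bigcupT_measurable|].
  have nd (Z : Omega -> T) :
      {homo (fun k => Z @^-1` F k) : a b / (a <= b)%N >-> (a <= b)%O}.
    move=> a b ab; have /subsetPset FaFb := ndF a b ab.
    by apply/subsetPset => w /FaFb.
  have cvgX := nondecreasing_cvg_mu (mu := P) mX (bigcupT_measurable _ mX) (nd X).
  have cvgY := nondecreasing_cvg_mu (mu := P) mY (bigcupT_measurable _ mY) (nd Y).
  have eXY : P \o (fun k => X @^-1` F k) = P \o (fun k => Y @^-1` F k).
    by apply/funext => k /=; case: (lawF k).
  rewrite eXY in cvgX; exact: cvg_unique cvgX cvgY.
Qed.

Lemma law_agree_sigma (T : Type) (G : set (set T)) (X Y : Omega -> T) :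
  setI_closed G -> G `<=` law_agree X Y -> <<s G >> `<=` law_agree X Y.
Proof.
move=> GI GXY.
exact: (lambda_system_subset GI (law_agree_lambda_system X Y) GXY).
Qed.

End law_agree.

Lemma share_lower_bound (R : realFieldType) (t a s q : R) :
  t <= 1 -> t * a <= s -> 0 <= q -> q * a <= 1 -> t - (1 - q * a) <= q * s.
Proof.
move=> t_le1 ta_le_s q_ge0 qa_le1.
have : 0 <= (1 - t) * (1 - q * a) by apply: mulr_ge0; rewrite subr_ge0.
have : q * (t * a) <= q * s by exact: ler_wpM2l.
nra.
Qed.

Section iid_priorities.
Local Open Scope ereal_scope.
Variables (d : measure_display) (Omega : measurableType d) (R : realType).
Variables (P : probability Omega R) (n : nat) (r : 'I_n -> Omega -> R).
Hypotheses (r_meas : forall j, measurable_fun setT (r j))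
  (r_indep : mutually_independent P r) (r_ident : identically_distributed P r).
Implicit Types (A S : {set 'I_n}) (j : 'I_n).

Let rvec (w : Omega) : 'I_n -> R := fun j => r j w.

Lemma boxes_law_perm (s : {perm 'I_n}) :
  boxes `<=` law_agree P rvec (fun w => rvec w \o s).
Proof.
have mbox (B : 'I_n -> set R) : (forall j, measurable (B j)) ->
    measurable [set w | forall j, B j (r j w)].
  move=> mB.
  have -> : [set w | forall j, B j (r j w)] = \bigcap_j r j @^-1` B j.
    by apply/seteqP; split=> w Bw j // => [_|]; apply: Bw.
  apply: fin_bigcap_measurable finite_finset _ => j _.
  by rewrite -[X in measurable X]setTI; exact: r_meas.
move=> _ [B mB <-].
have boxs : (fun w => rvec w \o s) @^-1` [set x | forall j, B j (x j)] =
    [set w | forall l, B (s^-1 l)%g (r l w)].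
  apply/seteqP; split=> w /= Bw l; last by have := Bw (s l); rewrite permK.
  by have := Bw (s^-1 l)%g; rewrite permKV.
rewrite /law_agree /= boxs.
split; [exact: mbox|exact: (mbox (fun l => B (s^-1 l)%g))|].
rewrite (r_indep mB) (r_indep (fun l => mB (s^-1 l)%g)).
rewrite [RHS](reindex_inj (@perm_inj _ s)) /=.
by apply: eq_bigr => j _; rewrite permK; exact: r_ident.
Qed.

Lemma sigma_law_perm (s : {perm 'I_n}) :
  <<s boxes >> `<=` law_agree P rvec (fun w => rvec w \o s).
Proof. exact: law_agree_sigma (@boxes_setI R n) (boxes_law_perm s). Qed.

Lemma measurable_strict_max A j : measurable (rvec @^-1` strict_max A j).
Proof. by have [] := sigma_law_perm 1 (strict_max_sigma A j). Qed.

Lemma prob_strict_max_eq A j j' : j \in A -> j' \in A ->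
  P (rvec @^-1` strict_max A j) = P (rvec @^-1` strict_max A j').
Proof.
move=> jA j'A; set s := tperm j j'.
have sA l : (s l \in A) = (l \in A).
  by rewrite /s; case: tpermP => [->|->|]; rewrite ?jA ?j'A.
have [_ _ ->] := sigma_law_perm s (strict_max_sigma A j).
by rewrite -[in RHS](tpermL j j') -/s -(strict_max_perm R j sA).
Qed.

Lemma measurable_strict_max_in A S :
  measurable (rvec @^-1` strict_max_in A S).
Proof.
have -> : rvec @^-1` strict_max_in A S =
    \bigcup_(j in [set j | j \in S]) rvec @^-1` strict_max A j by [].
apply: fin_bigcup_measurable finite_finset _ => j _.
exact: measurable_strict_max.
Qed.

Lemma prob_strict_max_in A S j0 : j0 \in A -> S \subset A ->
  P (rvec @^-1` strict_max_in A S) =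
  (fine (P (rvec @^-1` strict_max A j0)) *+ #|S|)%:E.
Proof.
move=> j0A SA.
have -> : rvec @^-1` strict_max_in A S =
    \big[setU/set0]_(j < n | j \in S) rvec @^-1` strict_max A j.
  rewrite -bigcup_seq_cond; apply/seteqP; split=> w /= [j].
    by move=> jS jmax; exists j => //=; rewrite mem_index_enum.
  by move=> /andP[_ jS] jmax; exists j.
rewrite measure_bigsetU_ord_cond; first last.
- move=> j k /(fintype.subsetP SA) jA /(fintype.subsetP SA) kA [w [jmax kmax]].
  exact: strict_max_uniq jA kA jmax kmax.
- by move=> j _; exact: measurable_strict_max.
rewrite -sumr_const -sumEFin; apply: eq_bigr => j jS.
rewrite fineK; first exact: prob_strict_max_eq (fintype.subsetP SA _ jS) j0A.
exact/fin_num_measure/measurable_strict_max.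
Qed.

Lemma prob_strict_max_in_ge A S j0 m :
  j0 \in A -> S \subset A -> (m <= #|S|)%N ->
  (m%:R / n%:R)%:E - P [set w | tie_for_highest A (rvec w)] <=
  P (rvec @^-1` strict_max_in A S).
Proof.
move=> j0A SA mS; set q := fine (P (rvec @^-1` strict_max A j0)).
have PA := prob_strict_max_in j0A (fintype.subxx A).
have -> : [set w | tie_for_highest A (rvec w)] =
    ~` (rvec @^-1` strict_max_in A A).
  by apply/seteqP; split=> w /(tie_for_highest_no_strict_max _ j0A).
rewrite probability_setC; last exact: measurable_strict_max_in.
rewrite PA (prob_strict_max_in j0A SA).
suff : ((m%:R / n%:R - (1 - q *+ #|A|))%:E <= (q *+ #|S|)%:E) by rewrite !EFinB.
rewrite lee_fin -(mulr_natr q #|A|) -(mulr_natr q #|S|).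
have n_gt0 : (0 < n%:R :> R)%R.
  by rewrite ltr0n (leq_ltn_trans _ (ltn_ord j0)).
have A_le_n : (#|A| <= n)%N by rewrite -[leqRHS]card_ord max_card.
have S_le_A := subset_leq_card SA.
apply: share_lower_bound.
- by rewrite ler_pdivrMr // mul1r ler_nat (leq_trans mS) ?(leq_trans S_le_A).
- by rewrite mulrAC ler_pdivrMr // -!natrM ler_nat leq_mul.
- exact/fine_ge0/measure_ge0.
- have := probability_le1 P (measurable_strict_max_in A A).
  by rewrite PA lee_fin mulr_natr.
Qed.

End iid_priorities.

Lemma probability_inhabited (d : measure_display) (Omega : measurableType d)
  (R : realType) (P : probability Omega R) : [set: Omega] !=set0.
Proof.
apply/set0P/eqP => Omega0; have := probability_setT P.
by rewrite Omega0 measure0 => /eqP; rewrite eq_sym onee_eq0.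
Qed.

Theorem lemma4 (R : realType) (d : measure_display) (Omega : measurableType d)
  (P : probability Omega R) (n : nat) (M : Type) (tr tb : nat)
  (r : 'I_n -> Omega -> R)
  (hs : 'I_n -> history R n M) (ms : 'I_n -> M)
  (A1 C1 A2 C2 : {set 'I_n}) (NR1 NB1 NR2 NB2 : 'I_n -> {set 'I_n})
  (sel1 sel2 : 'I_n -> set (history R n M) -> history R n M) (i : 'I_n) :
  (0 < tr)%N -> (0 < tb)%N ->
  (forall j, measurable_fun setT (r j)) ->
  mutually_independent P r ->
  identically_distributed P r ->
  nontrivial_distribution P r ->
  selects_best sel1 -> selects_best sel2 ->
  A2 \subset C1 ->
  (forall w, TSB_step tr tb A1 C1 (step1_msg hs ms (fun j => r j w)) NR1 NB1) ->
  (forall w, TSB_step tr tb A2 C2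
               (step2_msg hs ms (fun j => r j w) NB1 sel1) NR2 NB2) ->
  i \in C2 ->
  prob_at_least P
    [set w | delivers hs ms (fun j => r j w) NR1 NB1 NR2 NB2 sel1 sel2 i]
    ((tb%:R / n%:R)%:E - P [set w | tie_for_highest A1 (fun j => r j w)])%E.
Proof.
move=> _ tb_gt0 r_meas r_indep r_ident _ sel1_best sel2_best A2C1 tsb1 tsb2 iC2.
(* The sets N_R, N_B do not depend on the sample point, so any one fixes them. *)
have [w0 _] := probability_inhabited P.
have [_ sub1 thr1 _] := tsb1 w0; have [_ sub2 thr2 _] := tsb2 w0.
have [_ tb_NB2] := thr2 i iC2.
have /card_gt0P [k kNB2] := leq_trans tb_gt0 tb_NB2.
have kC1 : k \in C1.
  by apply: (fintype.subsetP A2C1); exact: (fintype.subsetP (sub2 i).2).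
have [_ tb_NB1] := thr1 k kC1.
have /card_gt0P [j0 j0NB1] := leq_trans tb_gt0 tb_NB1.
have NB1A1 : NB1 k \subset A1 by case: (sub1 k).
exists ((fun w j => r j w) @^-1` strict_max_in A1 (NB1 k)).
  exact: measurable_strict_max_in r_meas r_indep r_ident _ _.
split.
  move=> w [j jNB1 jmax].
  exact: delivers_strict_max tb_gt0 sel1_best sel2_best A2C1 (tsb1 w) (tsb2 w)
    iC2 kNB2 jNB1 jmax.
apply: (prob_strict_max_in_ge r_meas r_indep r_ident _ NB1A1 tb_NB1).
exact: (fintype.subsetP NB1A1 _ j0NB1).
Qed.
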